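(* Let $R$ be a non-trivial totally ordered positive aura such that $x>y$ implies that there exists $t>0$ with $x=y+t$, and suppose that the canonical map $\mathbb{N}\to R$ is injective. If $R$ is archimedean, then $R$ has tempered growth.
   Context: A halo is a commutative unital semiring with a partial order compatible with its operations ($x\le z,y\le t\Rightarrow xy\le zt,\ x+y\le z+t$). An aura is a halo whose underlying semiring is a semifield; it is positive if $0<1$. A halo is trivial if it is $\{0\}$ or equal to $\{0,1\}$ with $0\le1$, $1+1=1$. A positive halo $A$ is archimedean if $A$ is not reduced to $\{0,1\}$ and for all $x>y>0$ there is $n\in\mathbb{N}$ with $ny>x$. A halo $R$ has tempered growth if for every non-zero $P\in\mathbb{N}[X]$ and $x\in R$, ($x^n\le P(n)$ for all $n\in\mathbb{N}$) implies $x\le1$, where natural numbers are interpreted in $R$ as sums of $1$. *)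

From HB Require Import structures.
From mathcomp Require Import all_boot all_order all_algebra.
Set Implicit Arguments. Unset Strict Implicit. Unset Printing Implicit Defensive.
Import GRing.Theory.
Local Open Scope ring_scope.

Definition is_halo (R : comPzSemiRingType) (le : rel R) : Prop :=
  [/\ (forall x, le x x),
      (forall x y, le x y -> le y x -> x = y),
      (forall x y z, le x y -> le y z -> le x z),
      (forall x y z t, le x z -> le y t -> le (x * y) (z * t))
    & (forall x y z t, le x z -> le y t -> le (x + y) (z + t))].

Definition hlt (R : comPzSemiRingType) (le : rel R) (x y : R) : Prop :=
  le x y /\ x <> y.

Definition is_semifield (R : comPzSemiRingType) : Prop :=
  forall x : R, x <> 0 -> exists y, x * y = 1.

Definition is_aura (R : comPzSemiRingType) (le : rel R) : Prop :=
  is_halo le /\ is_semifield R.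

Definition is_positive (R : comPzSemiRingType) (le : rel R) : Prop :=
  hlt le 0 1.

Definition is_total (R : comPzSemiRingType) (le : rel R) : Prop :=
  forall x y : R, le x y \/ le y x.

Definition is_trivial_halo (R : comPzSemiRingType) (le : rel R) : Prop :=
  (forall x : R, x = 0) \/
  ((forall x : R, x = 0 \/ x = 1) /\ (0 : R) <> 1 /\ le 0 1 /\ (1 + 1 : R) = 1).

Definition is_archimedean (R : comPzSemiRingType) (le : rel R) : Prop :=
  ~ (forall x : R, x = 0 \/ x = 1) /\
  (forall x y : R, hlt le y x -> hlt le 0 y -> exists n : nat, hlt le x (y *+ n)).

(* tempered growth; P(n) for P in N[X] is interpreted in R via the
   canonical map N -> R (a semiring morphism), i.e. (P.[n])%:R. *)
Definition tempered_growth (R : comPzSemiRingType) (le : rel R) : Prop :=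
  forall (P : {poly nat}) (x : R), P != 0 ->
    (forall n : nat, le (x ^+ n) ((P.[n])%:R)) -> le x 1.

From HB Require Import structures.
From mathcomp Require Import all_boot all_order all_algebra.
From mathcomp Require Import zify ring.
Import GRing.Theory.
Set Implicit Arguments.

(* If x > 1 then x = 1 + t with t > 0, and for k = deg P + 2 the binomial
   theorem gives x^n >= C(n, k) t^k.  By the archimedean property m t^k >= 1
   for some m, and C(n, k) grows faster than m (P(n) + 1), so for large n we
   get x^n >= P(n) + 1 > P(n), contradicting x^n <= P(n) once N embeds in R. *)

Lemma ffact_mul_lb a N j : 0 < N -> N ^ j * a ^_ j <= (a * N) ^_ j.
Proof.
move=> N_gt0; elim: j => [|j IHj]; first by rewrite !ffactn0.
rewrite !ffactnSr expnS.
have -> : N * N ^ j * (a ^_ j * (a - j)) = (N ^ j * a ^_ j) * (N * (a - j)) by ring.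
by apply: leq_mul => //; nia.
Qed.

Lemma bin_mul_lb k N : 0 < N -> N ^ k <= 'C(k * N, k).
Proof.
move=> N_gt0; have := @ffact_mul_lb k N k N_gt0.
by rewrite ffactnn -bin_ffact leq_pmul2r ?fact_gt0.
Qed.

Lemma horner_nat_le (P : {poly nat}) n :
  (P.[n])%R <= (\sum_(i < size P) P`_i)%R * n.+1 ^ size P.
Proof.
rewrite horner_coef big_distrl /=; apply: leq_sum => i _.
rewrite natrXE; apply: leq_mul => //.
apply: leq_trans (leq_pexp2l _ (ltnW (ltn_ord i))) => //.
by case: (nat_of_ord i) => // e; rewrite leq_exp2r.
Qed.

Lemma bin_dominates_poly (P : {poly nat}) m :
  exists n, m * (P.[n])%R.+1 <= 'C(n, (size P).+1).
Proof.
set s := size P; set S := (\sum_(i < s) P`_i)%R; set k := s.+1.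
set A := k.*2 ^ s; set N := (m * (S * A).+1).+1.
exists (k * N).
have N_gt0 : 0 < N by [].
have NsA : (k * N).+1 ^ s <= A * N ^ s.
  rewrite /A -expnMn; case: (s) => // e; rewrite leq_exp2r // -mul2n; nia.
have PkN : (P.[k * N])%R <= S * A * N ^ s.
  apply: leq_trans (horner_nat_le P (k * N)) _.
  by rewrite -mulnA leq_mul2l NsA orbT.
apply: leq_trans _ (@bin_mul_lb k N N_gt0); rewrite /k expnS.
apply: (@leq_trans (m * (S * A * N ^ s).+1)); first by rewrite leq_mul2l ltnS PkN orbT.
have : 0 < N ^ s by rewrite expn_gt0 N_gt0.
rewrite /N; set B := N ^ s; nia.
Qed.

Local Open Scope ring_scope.

Section HaloOrder.

Variables (R : comPzSemiRingType) (le : rel R).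
Hypotheses (halo_le : is_halo le) (le01 : le 0 1).

Let le_refl x : le x x.
Proof. by case: halo_le. Qed.
Let leM x y z t : le x z -> le y t -> le (x * y) (z * t).
Proof. by case: halo_le => _ _ _ le_mul _; apply: le_mul. Qed.
Let leD x y z t : le x z -> le y t -> le (x + y) (z + t).
Proof. by case: halo_le => _ _ _ _ le_add; apply: le_add. Qed.

Lemma halo_addr_ge x y : le 0 y -> le x (x + y).
Proof. by move=> y_ge0; have := leD (le_refl x) y_ge0; rewrite addr0. Qed.

Lemma halo_mulr_ge0 x y : le 0 x -> le 0 y -> le 0 (x * y).
Proof. by move=> x_ge0 y_ge0; have := leM x_ge0 y_ge0; rewrite mul0r. Qed.

Lemma halo_exprn_ge0 x n : le 0 x -> le 0 (x ^+ n).
Proof.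
by move=> x_ge0; elim: n => [|n IHn]; rewrite ?expr0 // exprS halo_mulr_ge0.
Qed.

Lemma halo_sumr_ge0 (I : Type) (r : seq I) (Pr : pred I) (F : I -> R) :
  (forall i, Pr i -> le 0 (F i)) -> le 0 (\sum_(i <- r | Pr i) F i).
Proof.
move=> F_ge0; apply: (big_ind (le 0)) => //.
by move=> a b a_ge0 b_ge0; have := leD a_ge0 b_ge0; rewrite addr0.
Qed.

Lemma halo_mulrn_ge0 x n : le 0 x -> le 0 (x *+ n).
Proof. by move=> x_ge0; rewrite -[n]card_ord -sumr_const halo_sumr_ge0. Qed.

Lemma halo_ler_mulrn2l x m n : le 0 x -> (m <= n)%N -> le (x *+ m) (x *+ n).
Proof.
by move=> x_ge0 le_mn; rewrite -(subnKC le_mn) mulrnDr halo_addr_ge ?halo_mulrn_ge0.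
Qed.

Lemma halo_ler_mulrn2r x y n : le x y -> le (x *+ n) (y *+ n).
Proof. by move=> le_xy; elim: n => [|n IHn]; rewrite ?mulr0n // !mulrS leD. Qed.

Lemma halo_binomial_lb t n k : le 0 t -> le (t ^+ k *+ 'C(n, k)) ((1 + t) ^+ n).
Proof.
move=> t_ge0; have [lt_kn | le_nk] := ltnP k n.+1; last first.
  by rewrite bin_small // mulr0n halo_exprn_ge0 // -[0]addr0 leD.
rewrite exprDn (bigD1 (Ordinal lt_kn)) //= expr1n mul1r halo_addr_ge //.
by apply: halo_sumr_ge0 => i _; rewrite halo_mulrn_ge0 ?halo_mulr_ge0 ?halo_exprn_ge0.
Qed.

Lemma halo_natr_succ_nle p :
  injective (fun n : nat => (n%:R : R)) -> ~ le p.+1%:R p%:R.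
Proof.
move=> natr_inj le_Sp; apply: (@n_Sn p); apply: natr_inj.
have [_ le_anti _ _ _] := halo_le; apply: le_anti le_Sp.
by rewrite -addn1 natrD halo_addr_ge.
Qed.

End HaloOrder.

Lemma semifield_expr_neq0 (R : comPzSemiRingType) (t : R) k :
  is_semifield R -> (0 : R) <> 1 -> t <> 0 -> t ^+ k <> 0.
Proof.
move=> sfR neq01 t_neq0 tk0; have [w tw] := sfR t t_neq0.
by apply: neq01; rewrite -(expr1n _ k) -tw exprMn tk0 mul0r.
Qed.

Lemma archimedean_mulrn_ge1 (R : comPzSemiRingType) (le : rel R) (u : R) :
  is_total le -> is_archimedean le -> hlt le 0 u -> exists m, le 1 (u *+ m).
Proof.
move=> total_le [_ arch] u_gt0.
have [le1u | leu1] := total_le 1 u; first by exists 1%N.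
have [u1 | neq_u1] := eqVneq u 1; first by exists 1%N; move: leu1; rewrite mulr1n u1.
have [m [le1um _]] := arch 1 u (conj leu1 (elimN eqP neq_u1)) u_gt0.
by exists m.
Qed.

Theorem lemma1p29 (R : comPzSemiRingType) (le : rel R) :
  is_aura le -> is_positive le -> is_total le -> ~ is_trivial_halo le ->
  (forall x y : R, hlt le y x -> exists t : R, hlt le 0 t /\ x = y + t) ->
  injective (fun n : nat => (n%:R : R)) ->
  is_archimedean le ->
  tempered_growth le.
Proof.
move=> [halo_le sfR] [le01 neq01] total_le _ le_split natr_inj arch P x _ xn_le.
have [_ _ le_trans _ _] := halo_le.
have [// | le1x] := total_le x 1.
have [x1 | /eqP neq_x1] := eqVneq x 1; first by move: le1x; rewrite x1.
have [t [[t_ge0 neq0t] def_x]] := le_split x 1 (conj le1x (nesym neq_x1)); subst x.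
set u := t ^+ (size P).+1.
have u_gt0 : hlt le 0 u.
  split; first exact: halo_exprn_ge0.
  by apply/nesym/semifield_expr_neq0 => // /esym.
have [m le1um] := archimedean_mulrn_ge1 total_le arch u_gt0.
have [n le_mC] := bin_dominates_poly P m.
have le_Sp_xn : le (P.[n]%R).+1%:R ((1 + t) ^+ n).
  apply: (le_trans _ _ _ _ (halo_binomial_lb halo_le le01 _ n _ t_ge0)).
  apply: (le_trans _ _ _ _ (halo_ler_mulrn2l halo_le _ _ _ u_gt0.1 le_mC)).
  by rewrite mulrnA; apply: halo_ler_mulrn2r.
by case: (halo_natr_succ_nle halo_le le01 _ natr_inj (le_trans _ _ _ le_Sp_xn (xn_le n))).
Qed.
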